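(* Let $c_1\in(0,0.01)$ be a sufficiently small absolute constant and $c_0$ a sufficiently large absolute constant, let $n$ be sufficiently large and $\epsilon\in[c_0/\sqrt n,1)$. Then every function in the support of $\mathcal D_{\mathrm{yes}}$ is $(0.1c_1\epsilon)$-close to some monotone function $g:\{0,1\}^n\to\{0,1\}$, i.e. $\Pr_{x}[f(x)\ne g(x)]\le 0.1c_1\epsilon$.
   Context: Parameters: $a=\sqrt n/\epsilon$ and $m=n-a$ (assumed integers), $L=0.1\cdot 2^{\sqrt m/\epsilon}$. For $x\in\{0,1\}^n$ and $B\subseteq[n]$, $x_B\in\{0,1\}^B$ is the restriction of $x$ to $B$; $|z|$ is Hamming weight. For a set $A$ of size $a$, define on $\{0,1\}^A$: $h^{(+,0)}\equiv 0$; $h^{(+,1)}(z)=1$ if $|z|>a/2+c_1\sqrt a$ or $|z|<a/2-c_1\sqrt a$, and $0$ otherwise; $h^{(-,0)}(z)=1$ iff $|z|>a/2+c_1\sqrt a$; $h^{(-,1)}(z)=1$ iff $|z|<a/2-c_1\sqrt a$. $\mathsf{Talagrand}(m,\epsilon)$ on a coordinate set $C$ of size $m$: draw $L$ independent sets $\mathbf T_1,\dots,\mathbf T_L\subseteq C$, each formed by $\sqrt m/\epsilon$ independent uniform draws from $C$ with replacement; for $y\in\{0,1\}^C$, $S_T(y)=\{\ell: y_j=1\ \forall j\in T_\ell\}$. A draw $\mathbf f_{\mathrm{yes}}\sim\mathcal D_{\mathrm{yes}}$: choose $\mathbf A\subseteq[n]$ uniformly among sets of size $a$, put $\mathbf C=[n]\setminus\mathbf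 A$, draw $\mathbf T\sim\mathsf{Talagrand}(m,\epsilon)$ on $\mathbf C$, and uniform $\mathbf b\in\{0,1\}^L$; then $\mathbf f_{\mathrm{yes}}(x)=1$ if $|S_{\mathbf T}(x_{\mathbf C})|>1$ or $|x_{\mathbf C}|>m/2+0.05\epsilon\sqrt m$; otherwise $\mathbf f_{\mathrm{yes}}(x)=0$ if $|S_{\mathbf T}(x_{\mathbf C})|=0$ or $|x_{\mathbf C}|<m/2$; otherwise $S_{\mathbf T}(x_{\mathbf C})=\{\ell\}$ and $|x_{\mathbf C}|\in[m/2,m/2+0.05\epsilon\sqrt m]$, and $\mathbf f_{\mathrm{yes}}(x)=h^{(+,\mathbf b_\ell)}(x_{\mathbf A})$. A function is monotone if $f(x)\le f(y)$ whenever $x\le y$ coordinatewise. *)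

From HB Require Import structures.
From mathcomp Require Import all_boot all_order all_algebra.
From mathcomp Require Import Rstruct.
Set Implicit Arguments. Unset Strict Implicit. Unset Printing Implicit Defensive.
Import Order.TTheory GRing.Theory Num.Theory.
Local Open Scope ring_scope.

Notation R := Rdefinitions.R.

Notation cube n := {ffun 'I_n -> bool}.

Definition hw (n : nat) (x : cube n) (B : {set 'I_n}) : nat :=
  #|[set i in B | x i]|.

(* h^{(+,0)} = 0 and h^{(+,1)}, as functions of z in {0,1}^A, which depend
   only on |z|; asz = a = |A|. *)
Definition h_plus (c1 : R) (asz : nat) (bit : bool) (wz : nat) : bool :=
  if bit then
    (((asz%:R : R) / 2 + c1 * Num.sqrt asz%:R < wz%:R) ||
     ((wz%:R : R) < asz%:R / 2 - c1 * Num.sqrt asz%:R))%R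
  else false.

Definition S_T (n L k : nat) (T : 'I_L -> k.-tuple 'I_n) (x : cube n)
  : {set 'I_L} := [set l : 'I_L | all (fun j => x j) (T l)].

Definition f_yes (n : nat) (c1 eps : R) (L k : nat) (A : {set 'I_n})
  (T : 'I_L -> k.-tuple 'I_n) (b : 'I_L -> bool) (x : cube n) : bool :=
  let m := (n - #|A|)%N in
  let wC := hw x (~: A) in
  let S := S_T T x in
  if (1 < #|S|)%N || ((m%:R : R) / 2 + eps * Num.sqrt m%:R / 20 < wC%:R)%R then true
  else if (#|S| == 0)%N || ((wC%:R : R) < m%:R / 2)%R then false
  else match [pick l in S] with
       | Some l => h_plus c1 #|A| (b l) (hw x A)
       | None => false
       end.

Definition monotone (n : nat) (g : cube n -> bool) : Prop :=
  forall x y : cube n, (forall i, x i ==> y i) -> g x ==> g y.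

Definition dist (n : nat) (f g : cube n -> bool) : R :=
  #|[set x : cube n | f x != g x]|%:R / (2 ^ n)%:R.

From mathcomp Require Import all_boot all_order all_algebra.
From mathcomp Require Import Rstruct zify ring lra.
Set Implicit Arguments. Unset Strict Implicit. Unset Printing Implicit Defensive.
Import Order.TTheory GRing.Theory Num.Theory.

(* Replacing h^(+,b_l) by the constant b_l in the last case of f_yes gives a
   monotone function: every case condition is monotone in x, and two comparable
   inputs that both reach the last case have the same singleton S_T.  The two
   functions differ only when |x_A| is within c1 sqrt a of a/2 and |x_C| lies in
   [m/2, m/2 + eps sqrt m / 20].  Each weight of a block of size t has
   probability at most sqrt (2 / 3t) (central binomial bound), so these
   independent events have probabilities O(c1) and O(eps), and their
   conjunction has probability below c1 eps / 10. *)

Lemma mul_bin_central_succ s :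
  s.+1 * 'C(s.*2.+2, s.+1) = 2 * s.*2.+1 * 'C(s.*2, s).
Proof.
have sym : 'C(s.*2.+1, s.+1) = 'C(s.*2.+1, s).
  by rewrite -(bin_sub (_ : s <= s.*2.+1)); [congr 'C(_, _); lia | lia].
have diag_odd := mul_bin_diag s.*2.+2 s.
have diag_even := mul_bin_diag s.*2.+1 s.
rewrite /= sym in diag_odd diag_even.
rewrite -diag_odd; apply/eqP; rewrite -(eqn_pmul2l (ltn0Sn s)) mulnCA -diag_even.
by apply/eqP; rewrite -doubleS -!mul2n; ring.
Qed.

Lemma bin_central_sqr s : 'C(s.*2, s) ^ 2 * (3 * s + 1) <= 16 ^ s.
Proof.
elim: s => [|s IH]; first by rewrite bin0.
have succ_eq := mul_bin_central_succ s.
set C := 'C(s.*2, s) in succ_eq IH *.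
set C' := 'C(s.*2.+2, s.+1) in succ_eq *.
rewrite -(leq_pmul2l (_ : 0 < s.+1 ^ 2)) ?expn_gt0 //.
have -> : s.+1 ^ 2 * (C' ^ 2 * (3 * s.+1 + 1)) = 4 * s.*2.+1 ^ 2 * (3 * s + 4) * C ^ 2.
  by rewrite mulnA -expnMn succ_eq !expnMn; ring.
have ratio : 4 * s.*2.+1 ^ 2 * (3 * s + 4) <= 16 * s.+1 ^ 2 * (3 * s + 1).
  by rewrite -mul2n !expnS expn0 !muln1; clear; nia.
apply: leq_trans (leq_mul ratio (leqnn _)) _.
rewrite [16 ^ _]expnS mulnCA [X in _ <= X]mulnA -mulnA leq_mul2l [_ * C ^ 2]mulnC.
by rewrite IH orbT.
Qed.

Lemma leq_bin2r_half t i j : i <= j -> j <= t./2 -> 'C(t, i) <= 'C(t, j).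
Proof.
elim: j => [|j IH] hij hj; first by have -> : i = 0 by lia.
case: (ltngtP i j.+1) => [lt_ij||->] //; last by lia.
apply: leq_trans (IH _ _) _; [lia | lia |].
have ht : j.+1 <= t - j by have := odd_double_half t; rewrite -addnn; lia.
by rewrite -(leq_pmul2l (ltn0Sn j)) mul_bin_left leq_mul2r ht orbT.
Qed.

Lemma leq_bin_half t i : 'C(t, i) <= 'C(t, t./2).
Proof.
have ht := odd_double_half t; rewrite -addnn in ht.
have [hi|hi] := leqP i t./2; first exact: leq_bin2r_half.
have [it|it] := leqP i t; last by rewrite bin_small.
by rewrite -bin_sub //; apply: leq_bin2r_half; lia.
Qed.

Lemma bin_half_sqr t : 'C(t, t./2) ^ 2 * (3 * t + 2) <= 2 * 4 ^ t.
Proof.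
have ht := odd_double_half t; set s := t./2 in ht *.
have four_pow : 4 ^ s.*2 = 16 ^ s by rewrite -mul2n expnM.
case: (odd t) ht => /= <-; rewrite ?add0n ?add1n; last first.
  by have := bin_central_sqr s; rewrite four_pow; move: ('C(_, _) ^ 2) => D; lia.
have sym : 'C(s.*2.+2, s.+1) = 2 * 'C(s.*2.+1, s).
  apply/eqP; rewrite -(eqn_pmul2l (ltn0Sn s)) -(mul_bin_diag s.*2.+2 s) /=.
  by apply/eqP; rewrite -mul2n; ring.
have := bin_central_sqr s.+1.
rewrite doubleS sym expnMn [16 ^ _]expnS [4 ^ _]expnS four_pow.
by move: ('C(_, _) ^ 2) (16 ^ s) => D Q; nia.
Qed.

Local Open Scope ring_scope.

Lemma sqrt_mul_bin_half_le (t : nat) :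
  Num.sqrt t%:R * 'C(t, t./2)%:R <= 5 / 6 * (2 ^ t)%:R :> R.
Proof.
set s := Num.sqrt _; set M := 'C(_, _)%:R; set p := (2 ^ t)%:R.
have s2 : s ^+ 2 = t%:R by rewrite sqr_sqrtr.
have M_sqr_le : M ^+ 2 * (3 * t%:R + 2) <= 2 * p ^+ 2.
  rewrite /M /p -!natrX -(natrM _ 3 t) -natrD -!natrM ler_nat.
  rewrite -expnM [(t * 2)%N]mulnC expnM; exact: bin_half_sqr.
(* 5/6 exceeds sqrt (2/3) *)
rewrite -(ler_pXn2r (n := 2)) ?nnegrE ?mulr_ge0 ?sqrtr_ge0 //; last by lra.
by rewrite exprMn s2; nra.
Qed.

Definition window (P : pred nat) (w : R) :=
  forall i j, P i -> P j -> i%:R - j%:R <= w.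

Definition band (lo hi : R) : pred nat := fun i => lo <= i%:R <= hi.

Lemma count_window_le N (P : pred nat) (w : R) :
  0 <= w -> window P w -> (count P (iota 0 N))%:R <= w + 1.
Proof.
move=> w_ge0 Pw.
have [/hasP[i0]|] := boolP (has P (iota 0 N)); last first.
  by rewrite has_count -leqNgt leqn0 => /eqP->; lra.
rewrite mem_iota => /andP[_ i0N] Pi0.
have exP : exists i, P i && (i < N)%N by exists i0; rewrite Pi0.
have PN_le (i : nat) : P i && (i < N)%N -> (i <= N)%N by case/andP=> _ /ltnW.
have [lo /andP[Plo loN] lo_min] := ex_minnP exP.
have [hi /andP[Phi hiN] hi_max] := ex_maxnP exP PN_le.
have lo_hi : (lo <= hi)%N by apply: hi_max; rewrite Plo.
have count_le : (count P (iota 0 N) <= (hi - lo).+1)%N.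
  rewrite -size_filter -(size_iota lo (hi - lo).+1).
  apply: uniq_leq_size; first by rewrite filter_uniq ?iota_uniq.
  move=> x; rewrite mem_filter mem_iota => /andP[Px /andP[_ xN]].
  have PxN : P x && (x < N)%N by rewrite Px.
  by rewrite mem_iota (lo_min _ PxN) /=; have := hi_max _ PxN; lia.
apply: le_trans (_ : (hi - lo).+1%:R <= _); first by rewrite ler_nat.
by rewrite -addn1 natrD natrB // lerD2r; apply: Pw.
Qed.

Lemma card_subsets_band (T : finType) (B : {set T}) (P : pred nat) :
  (#|[set S : {set T} | (S \subset B) && P #|S|]|
     <= count P (iota 0 #|B|.+1) * 'C(#|B|, #|B|./2))%N.
Proof.
have size_lt (S : {set T}) : S \subset B -> (#|S| < #|B|.+1)%N.
  by move/subset_leq_card.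
pose size_ord (S : {set T}) : 'I_#|B|.+1 := inord #|S|.
rewrite -sum1_card (partition_big size_ord P); last first.
  by move=> S; rewrite inE => /andP[/size_lt SB PS]; rewrite inordK.
apply: (@leq_trans (\sum_(j < #|B|.+1 | P j) 'C(#|B|, #|B|./2))).
  apply: leq_sum => j _; apply: leq_trans (leq_bin_half _ j).
  rewrite -cards_draws sum1dep_card subset_leq_card //.
  apply/subsetP => S; rewrite !inE => /andP[/andP[SB _] /eqP <-].
  by rewrite SB inordK ?eqxx // size_lt.
rewrite -(big_mkord (fun j => P j) (fun _ => 'C(#|B|, #|B|./2))).
by rewrite big_const_seq iter_addn_0 mulnC.
Qed.

Lemma card_subsets_window (T : finType) (B : {set T}) (P : pred nat) (w : R) :
  0 <= w -> window P w ->
  #|[set S : {set T} | (S \subset B) && P #|S|]|%:R * Num.sqrt #|B|%:R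
    <= 5 / 6 * (w + 1) * (2 ^ #|B|)%:R.
Proof.
move=> w_ge0 Pw.
pose c : R := (count P (iota 0 #|B|.+1))%:R.
pose M : R := 'C(#|B|, #|B|./2)%:R; set s := Num.sqrt _.
apply: le_trans (_ : c * M * s <= _).
  by rewrite -natrM ler_wpM2r ?sqrtr_ge0 // ler_nat card_subsets_band.
have c_le : c <= w + 1 by apply: count_window_le.
have sM_le : s * M <= 5 / 6 * (2 ^ #|B|)%:R := sqrt_mul_bin_half_le _.
have sM_ge0 : 0 <= s * M by rewrite mulr_ge0 ?sqrtr_ge0.
nra.
Qed.

Definition g_yes (n : nat) (eps : R) (L k : nat) (A : {set 'I_n})
  (T : 'I_L -> k.-tuple 'I_n) (b : 'I_L -> bool) (x : cube n) : bool :=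
  let m := (n - #|A|)%N in
  let wC := hw x (~: A) in
  let S := S_T T x in
  if (1 < #|S|)%N || ((m%:R : R) / 2 + eps * Num.sqrt m%:R / 20 < wC%:R) then true
  else if (#|S| == 0)%N || (wC%:R < (m%:R : R) / 2) then false
  else if [pick l in S] is Some l then b l else false.

Lemma card_split_weights n (B : {set 'I_n}) (P Q : pred nat) :
  (#|[set x : cube n | P (hw x B) && Q (hw x (~: B))]|
    <= #|[set S : {set 'I_n} | (S \subset B) && P #|S|]|
       * #|[set S : {set 'I_n} | (S \subset ~: B) && Q #|S|]|)%N.
Proof.
pose split (x : cube n) := ([set i in B | x i], [set i in ~: B | x i]).
have split_inj : injective split.
  move=> x y [] /setP eqB /setP eqC; apply/ffunP => i.
  by case: (boolP (i \in B)) => iB; [move: (eqB i) | move: (eqC i)]; rewrite !inE iB.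
rewrite -cardsX -(card_imset _ split_inj) subset_leq_card //.
apply/subsetP => p /imsetP[x]; rewrite inE => /andP[Px Qx] ->.
rewrite !inE -!/(hw x _) Px Qx !andbT.
by apply/andP; split; apply/subsetP => i; rewrite inE => /andP[].
Qed.

Section MonotoneApproximation.

Variables (n : nat) (c1 eps : R) (L k : nat) (A : {set 'I_n}).
Variables (T : 'I_L -> k.-tuple 'I_n) (b : 'I_L -> bool).

Let m := (n - #|A|)%N.
Let top (x : cube n) :=
  (1 < #|S_T T x|)%N || ((m%:R : R) / 2 + eps * Num.sqrt m%:R / 20 < (hw x (~: A))%:R).
Let bottom (x : cube n) :=
  (#|S_T T x| == 0)%N || ((hw x (~: A))%:R < (m%:R : R) / 2).

Lemma g_yes_monotone : monotone (g_yes eps A T b).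
Proof.
move=> x y le_xy; apply/implyP; rewrite /g_yes -/m -/(top x) -/(top y).
rewrite -/(bottom x) -/(bottom y).
have S_sub : S_T T x \subset S_T T y.
  apply/subsetP => l; rewrite !inE => /allP Tx; apply/allP => j /Tx.
  exact/implyP/le_xy.
have w_le : ((hw x (~: A))%:R <= (hw y (~: A))%:R :> R).
  rewrite ler_nat subset_leq_card //; apply/subsetP => i; rewrite !inE.
  by case/andP=> -> /(implyP (le_xy i)).
have S_le := subset_leq_card S_sub.
case: (boolP (top y)) => // /norP[]; rewrite -leqNgt -leNgt => Sy_le1 wy_le.
have /negbTE-> : ~~ top x.
  by apply/norP; rewrite -leqNgt -leNgt (leq_trans S_le) ?(le_trans w_le).
case: (boolP (bottom x)) => // /norP[]; rewrite -lt0n -leNgt => Sx_gt0 wx_ge.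
have /negbTE-> : ~~ bottom y.
  by apply/norP; rewrite -lt0n -leNgt (leq_trans Sx_gt0) ?(le_trans wx_ge).
suff -> : S_T T x = S_T T y by [].
by apply/eqP; rewrite eqEcard S_sub (leq_trans Sy_le1).
Qed.

Let bandA :=
  band (#|A|%:R / 2 - c1 * Num.sqrt #|A|%:R) (#|A|%:R / 2 + c1 * Num.sqrt #|A|%:R).
Let bandC := band (m%:R / 2) (m%:R / 2 + eps * Num.sqrt m%:R / 20).

Lemma f_yes_neq_g_yes (x : cube n) :
  f_yes c1 eps A T b x != g_yes eps A T b x -> bandA (hw x A) && bandC (hw x (~: A)).
Proof.
rewrite /f_yes /g_yes -/m -/(top x) -/(bottom x).
case: (boolP (top x)) => // /norP[_]; rewrite -leNgt => w_le.
case: (boolP (bottom x)) => // /norP[_]; rewrite -leNgt => w_ge.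
case: pickP => // l _; rewrite /h_plus; case: (b l) => //=.
case: (boolP (_ || _)) => // /norP[]; rewrite -!leNgt => hi lo _.
by rewrite /bandA /bandC /band lo hi w_le w_ge.
Qed.

Lemma dist_f_yes_g_yes :
  0 < c1 -> 0 < eps -> 5 <= c1 * Num.sqrt #|A|%:R -> 200 <= eps * Num.sqrt m%:R ->
  dist (f_yes c1 eps A T b) (g_yes eps A T b) <= c1 * eps / 10.
Proof.
move=> c1_gt0 eps_gt0 big_A big_C.
set sa := Num.sqrt #|A|%:R in big_A; set sm := Num.sqrt m%:R in big_C.
set pA : R := (2 ^ #|A|)%:R; set pC : R := (2 ^ m)%:R.
pose X : R := #|[set S : {set 'I_n} | (S \subset A) && bandA #|S|]|%:R.
pose Y : R := #|[set S : {set 'I_n} | (S \subset ~: A) && bandC #|S|]|%:R.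
have pA_ge0 : 0 <= pA by rewrite ler0n.
have pC_ge0 : 0 <= pC by rewrite ler0n.
have sa_gt0 : 0 < sa.
  rewrite lt0r sqrtr_ge0 andbT; apply: contraTneq big_A => ->.
  by rewrite mulr0 -ltNge ltr0n.
have sm_gt0 : 0 < sm.
  rewrite lt0r sqrtr_ge0 andbT; apply: contraTneq big_C => ->.
  by rewrite mulr0 -ltNge ltr0n.
(* The size hypotheses give 2 c1 sa + 1 <= 11/5 c1 sa
   and eps sm / 20 + 1 <= 11/200 eps sm. *)
have X_le : X <= 11 / 6 * c1 * pA.
  have wA : window bandA (2 * c1 * sa).
    by move=> i j /andP[_ hi] /andP[lo _]; move: hi lo; rewrite -/sa; lra.
  have wA_ge0 : 0 <= 2 * c1 * sa by lra.
  have bound := card_subsets_window A wA_ge0 wA.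
  by rewrite -(ler_pM2r sa_gt0); apply: le_trans bound _; rewrite -/pA; nra.
have Y_le : Y <= 11 / 240 * eps * pC.
  have wC : window bandC (eps * sm / 20).
    by move=> i j /andP[_ hi] /andP[lo _]; move: hi lo; rewrite -/sm; lra.
  have card_C : #|~: A| = m by rewrite cardsCs setCK card_ord.
  have wC_ge0 : 0 <= eps * sm / 20 by lra.
  have bound := card_subsets_window (~: A) wC_ge0 wC; rewrite card_C in bound.
  by rewrite -(ler_pM2r sm_gt0); apply: le_trans bound _; rewrite -/sm -/pC; nra.
have bad_le : #|[set x | f_yes c1 eps A T b x != g_yes eps A T b x]|%:R <= X * Y.
  rewrite -natrM ler_nat; apply: leq_trans (card_split_weights A bandA bandC).
  by apply/subset_leq_card/subsetP => x; rewrite !inE; apply: f_yes_neq_g_yes.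
have pow_split : (2 ^ n)%:R = pA * pC.
  by rewrite -natrM -expnD subnKC // -[r in (_ <= r)%N]card_ord max_card.
rewrite /dist pow_split ler_pdivrMr ?mulr_gt0 ?ltr0n ?expn_gt0 //.
apply: le_trans bad_le _.
apply: le_trans (ler_pM _ _ X_le Y_le) _; rewrite ?ler0n //.
have : 0 <= c1 * eps * (pA * pC) by rewrite !mulr_ge0 // ltW.
nra.
Qed.

End MonotoneApproximation.

Lemma regime_bounds (c1 eps : R) (n a : nat) :
  0 < c1 -> (25 / c1 ^+ 2) ^+ 2 <= n%:R -> 300 / Num.sqrt n%:R <= eps -> eps < 1 ->
  a%:R = Num.sqrt n%:R / eps ->
  [/\ 0 < eps, 5 <= c1 * Num.sqrt a%:R & 200 <= eps * Num.sqrt (n - a)%:R].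
Proof.
move=> c1_gt0 n_big eps_big eps_lt1 def_a.
set sn := Num.sqrt n%:R in eps_big def_a.
have n_gt0 : 0 < n%:R :> R.
  by apply: lt_le_trans n_big; rewrite exprn_gt0 ?divr_gt0 ?exprn_gt0.
have sn_gt0 : 0 < sn by rewrite sqrtr_gt0.
have sn2 : sn ^+ 2 = n%:R by rewrite /sn sqr_sqrtr // ltW.
have eps_gt0 : 0 < eps by apply: lt_le_trans eps_big; rewrite divr_gt0.
have u_big : 300 <= eps * sn by rewrite -ler_pdivrMr.
have a_eps : a%:R * eps = sn by rewrite def_a mulfVK // gt_eqF.
split=> //.
  have sn_big : 25 / c1 ^+ 2 <= sn.
    by rewrite -(ler_pXn2r (n := 2)) ?nnegrE ?sn2 ?(ltW sn_gt0) // divr_ge0 ?sqr_ge0.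
  have sa2 : Num.sqrt a%:R ^+ 2 = a%:R :> R by rewrite sqr_sqrtr.
  rewrite -(ler_pXn2r (n := 2)) ?nnegrE ?mulr_ge0 ?sqrtr_ge0 ?(ltW c1_gt0) //.
  have sn_le_a : sn <= a%:R by have := ler0n R a; nra.
  have c1_cancel : c1 ^+ 2 * (25 / c1 ^+ 2) = 25.
    by rewrite mulrC divfK // expf_neq0 // gt_eqF.
  by rewrite exprMn sa2; have := sqr_ge0 c1; nra.
have eps2_a : eps ^+ 2 * a%:R = eps * sn by rewrite -a_eps; ring.
have eps2_n : eps ^+ 2 * n%:R = (eps * sn) ^+ 2 by rewrite exprMn sn2.
have eps2_gt0 : 0 < eps ^+ 2 by rewrite exprn_gt0.
have a_lt_n : (a < n)%N by rewrite -(ltr_nat R); nra.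
rewrite -(ler_pXn2r (n := 2)) ?nnegrE ?mulr_ge0 ?sqrtr_ge0 ?(ltW eps_gt0) //.
by rewrite exprMn sqr_sqrtr // natrB ?(ltnW a_lt_n) // mulrBr eps2_a eps2_n; nra.
Qed.

Theorem mainTheorem5 :
  exists c1bar : R, 0 < c1bar <= 1 / 100 /\
  forall c1 : R, 0 < c1 < c1bar ->
  exists c0 : R, exists N : nat,
  forall (n : nat) (eps : R) (a k : nat),
    (N <= n)%N ->
    c0 / Num.sqrt n%:R <= eps -> eps < 1 ->
    a%:R = Num.sqrt n%:R / eps ->
    k%:R = Num.sqrt (n - a)%N%:R / eps ->
    forall (A : {set 'I_n}), #|A| = a ->
    forall (T : 'I_(2 ^ k %/ 10) -> k.-tuple 'I_n),
      (forall l j, j \in T l -> j \notin A) ->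
    forall (b : 'I_(2 ^ k %/ 10) -> bool),
    exists g : cube n -> bool,
      monotone g /\ dist (f_yes c1 eps A T b) g <= c1 * eps / 10.
Proof.
exists (1 / 100); split; first by apply/andP; split; lra.
move=> c1 /andP[c1_gt0 _].
pose n0 : R := (25 / c1 ^+ 2) ^+ 2.
have n0_ge0 : 0 <= n0 by rewrite sqr_ge0.
exists 300, (Num.bound n0).
(* Neither the size k of the sets T_l nor their disjointness from A matters here. *)
move=> n eps a k n_big eps_big eps_lt1 def_a _ A card_A T _ b.
exists (g_yes eps A T b); split; first exact: g_yes_monotone.
have n_ge_n0 : n0 <= n%:R by rewrite (le_trans (ltW (archi_boundP n0_ge0))) ?ler_nat.
have [eps_gt0 big_A big_C] := regime_bounds c1_gt0 n_ge_n0 eps_big eps_lt1 def_a.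
by apply: dist_f_yes_g_yes; rewrite ?card_A.
Qed.
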